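(* Let $\sigma=10$, $r=27$, $\beta=8/3$, and for $0<d\le 20$ let $F:\mathbb{R}^2\to\mathbb{R}^2$ be the map \[ F(x,y)=\Bigl(\tfrac{\sigma}{d}\Bigl(x-\tfrac{\beta r x}{\beta+x^2}\Bigr)+2x-y,\; x\Bigr). \] Then for every $0<d\le 20$ the map $F$ has a homoclinic point and infinitely many periodic points.
   Context: The fixed points of $F$ are $(0,0)$ and $\pm(\sqrt{\beta(r-1)},\sqrt{\beta(r-1)})$. A homoclinic point is a point, different from $q$, lying in the intersection of the stable and unstable manifolds $W^s(q)\cap W^u(q)$ of a hyperbolic fixed point $q$ of $F$. Periodic orbits of $F$ of period $n$ correspond to steady states of a ring of $n$ Lorenz oscillators coupled diffusively with strength $d$ in the $x$ variable. *)

From Stdlib Require Import Reals Lra List.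
From Coquelicot Require Import Coquelicot.
Open Scope R_scope.

Definition sigma : R := 10.
Definition rho : R := 27.
Definition beta : R := 8 / 3.

Definition Fmap (d : R) (p : R * R) : R * R :=
  let x := fst p in let y := snd p in
  (sigma / d * (x - beta * rho * x / (beta + x ^ 2)) + 2 * x - y, x).

Definition iterF (f : R * R -> R * R) (n : nat) (p : R * R) : R * R :=
  Nat.iter n f p.

(* The linear map L : R^2 -> R^2 has a (complex) eigenvalue a + i b of
   modulus 1: its complexification has an eigenvector u + i w <> 0. *)
Definition has_unit_modulus_eigenvalue (L : R * R -> R * R) : Prop :=
  exists a b : R, exists u w : R * R,
    a ^ 2 + b ^ 2 = 1 /\
    (u <> (0, 0) \/ w <> (0, 0)) /\
    L u = (a * fst u - b * fst w, a * snd u - b * snd w) /\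
    L w = (b * fst u + a * fst w, b * snd u + a * snd w).

Definition hyperbolic_fixed_point (f : R * R -> R * R) (q : R * R) : Prop :=
  f q = q /\
  exists L : R * R -> R * R,
    filterdiff f (locally q) L /\ ~ has_unit_modulus_eigenvalue L.

Definition stable_set (f : R * R -> R * R) (q p : R * R) : Prop :=
  filterlim (fun n => iterF f n p) eventually (locally q).

(* Unstable set W^u(q): some backward orbit of p converges to q.
   (For an invertible f, as F is, this is the usual F^{-n}(p) -> q.) *)
Definition unstable_set (f : R * R -> R * R) (q p : R * R) : Prop :=
  exists s : nat -> R * R,
    s 0%nat = p /\ (forall n, f (s (S n)) = s n) /\
    filterlim s eventually (locally q).

Definition homoclinic_point (f : R * R -> R * R) (p : R * R) : Prop :=
  exists q, hyperbolic_fixed_point f q /\ p <> q /\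
    stable_set f q p /\ unstable_set f q p.

Definition periodic_point (f : R * R -> R * R) (p : R * R) : Prop :=
  exists n : nat, (0 < n)%nat /\ iterF f n p = p.

Definition infinitely_many (P : R * R -> Prop) : Prop :=
  forall l : list (R * R), exists p, P p /\ ~ In p l.

(* Writing F = henon G, i.e. F (x, y) = (G x - y, x), an orbit of F is a sequence
   (x_k) with G x_k = x_(k-1) + x_(k+1).  On [a, b] = [17/10, sqrt (beta (r - 1))] the
   odd function G increases with slope at least 5/2, G a <= a - b and G b = 2 b.
   Hence, for a sign sequence s in which every site shares its sign with a neighbour,
   x_k = G^-1 (x_(k-1) + x_(k+1)), with G^-1 taken on the copy of [a, b] of sign s_k,
   is a monotone self-map of a product of intervals, and its iterates from a
   subsolution increase to an orbit with signs s.  Alternating blocks of L positive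
   and L negative signs give periodic orbits, told apart by their first sign change;
   the signs (..., +, +, -, -, +, +, ...) with a subsolution tending to b like 2^-|k|
   on the positive sites give an orbit converging to the hyperbolic fixed point
   (b, b) in both time directions. *)

From Stdlib Require Import Reals Lra Lia ZArith ClassicalEpsilon List.
From Coquelicot Require Import Coquelicot.
Open Scope R_scope.

Definition henon (g : R -> R) (p : R * R) : R * R := (g (fst p) - snd p, fst p).

Lemma henon_filterdiff g q q' t : is_derive g q t ->
  filterdiff (henon g) (locally (q, q')) (fun p : R * R => (t * fst p - snd p, fst p)).
Proof.
  intros Hg.
  assert (Hfst : filterdiff (fun p : R * R => fst p) (locally (q, q')) (fun p : R * R => fst p))
    by apply filterdiff_linear, is_linear_fst.
  assert (Hsnd : filterdiff (fun p : R * R => snd p) (locally (q, q')) (fun p : R * R => snd p))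
    by apply filterdiff_linear, is_linear_snd.
  assert (Hgfst : filterdiff (fun p : R * R => g (fst p)) (locally (q, q')) (fun p => scal (fst p) t))
    by exact (filterdiff_comp' fst g (q, q') fst (fun y => scal y t) Hfst Hg).
  assert (Hfirst : filterdiff (fun p : R * R => minus (g (fst p)) (snd p)) (locally (q, q'))
                     (fun p : R * R => minus (scal (fst p) t) (snd p))).
  { apply (filterdiff_comp'_2 _ _ minus _ _ _ minus Hgfst Hsnd), filterdiff_minus. }
  assert (Hpair : filterdiff (fun p : R * R => (minus (g (fst p)) (snd p), fst p)) (locally (q, q'))
                    (fun p : R * R => (minus (scal (fst p) t) (snd p), fst p))).
  { apply (filterdiff_comp'_2 _ _ (fun u v : R => (u, v)) _ _ _ (fun u v : R => (u, v)) Hfirst Hfst).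
    apply filterdiff_linear, is_linear_prod; [apply is_linear_fst | apply is_linear_snd]. }
  eapply filterdiff_ext_lin; [exact Hpair|].
  intros [y1 y2]. cbn. f_equal. change (y1 * t - y2 = t * y1 - y2). ring.
Qed.

Lemma companion_no_unit_modulus_eigenvalue t : 2 < Rabs t ->
  ~ has_unit_modulus_eigenvalue (fun p : R * R => (t * fst p - snd p, fst p)).
Proof.
  intros Ht [a [b [[u1 u2] [[w1 w2] [Hab [Hnz [Eu Ew]]]]]]].
  cbn in Eu, Ew. injection Eu as Eu1 Eu2. injection Ew as Ew1 Ew2. subst u1 w1.
  (* With z = u2 + i w2 and l = a + i b, the equations say (t l - 1 - l^2) z = 0;
     the real part of conj(l z) times it is |z|^2 (t - 2 a) since |l| = 1. *)
  assert (Hkey : (u2 * u2 + w2 * w2) * (t - 2 * a) = 0).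
  { set (e1 := t * (a * u2 - b * w2) - u2 - (a * (a * u2 - b * w2) - b * (b * u2 + a * w2))).
    set (e2 := t * (b * u2 + a * w2) - w2 - (b * (a * u2 - b * w2) + a * (b * u2 + a * w2))).
    assert (He1 : e1 = 0) by (unfold e1; lra).
    assert (He2 : e2 = 0) by (unfold e2; lra).
    transitivity (a * (u2 * e1 + w2 * e2) + b * (u2 * e2 - w2 * e1)
                  + (u2 * u2 + w2 * w2) * (t - a) * (1 - (a ^ 2 + b ^ 2))).
    - unfold e1, e2. ring.
    - rewrite He1, He2, Hab. ring. }
  assert (Ha : Rabs a <= 1).
  { apply Rabs_le. nra. }
  destruct (Rmult_integral _ _ Hkey) as [Hz|Hta].
  - assert (u2 = 0) by nra. assert (w2 = 0) by nra. subst u2 w2.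
    destruct Hnz as [H|H]; apply H; f_equal; ring.
  - assert (t = 2 * a) by lra. subst t. rewrite Rabs_mult, Rabs_pos_eq in Ht by lra. lra.
Qed.

Lemma henon_hyperbolic g q t : g q = 2 * q -> is_derive g q t -> 2 < Rabs t ->
  hyperbolic_fixed_point (henon g) (q, q).
Proof.
  intros Hq Hg Ht. split.
  - unfold henon. cbn. rewrite Hq. f_equal. ring.
  - eexists. split; [apply henon_filterdiff, Hg|].
    apply companion_no_unit_modulus_eigenvalue, Ht.
Qed.

Lemma henon_step g (x : Z -> R) k :
  (forall k, g (x k) = x (k - 1)%Z + x (k + 1)%Z) ->
  henon g (x k, x (k - 1)%Z) = (x (k + 1)%Z, x k).
Proof. intros Hx. unfold henon. cbn. rewrite Hx. f_equal. ring. Qed.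

Lemma iterF_henon g (x : Z -> R) :
  (forall k, g (x k) = x (k - 1)%Z + x (k + 1)%Z) ->
  forall n k, iterF (henon g) n (x k, x (k - 1)%Z) =
              (x (k + Z.of_nat n)%Z, x (k + Z.of_nat n - 1)%Z).
Proof.
  intros Hx n k. induction n as [|n IH].
  - cbn. now rewrite Z.add_0_r.
  - change (iterF (henon g) (S n) (x k, x (k - 1)%Z))
      with (henon g (iterF (henon g) n (x k, x (k - 1)%Z))).
    rewrite IH, (henon_step g x _ Hx).
    replace (k + Z.of_nat (S n))%Z with (k + Z.of_nat n + 1)%Z by lia.
    now replace (k + Z.of_nat n + 1 - 1)%Z with (k + Z.of_nat n)%Z by lia.
Qed.

Definition first_negative_time (f : R * R -> R * R) (p : R * R) (n : nat) : Prop :=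
  (forall j, (j < n)%nat -> 0 < fst (iterF f j p)) /\ fst (iterF f n p) < 0.

Lemma first_negative_time_unique f p n n' :
  first_negative_time f p n -> first_negative_time f p n' -> n = n'.
Proof.
  intros [Hpos Hneg] [Hpos' Hneg'].
  destruct (Nat.lt_trichotomy n n') as [Hlt|[Heq|Hlt]]; [|exact Heq|].
  - specialize (Hpos' n Hlt). lra.
  - specialize (Hpos n' Hlt). lra.
Qed.

Lemma infinitely_many_of_unbounded_tags (P : R * R -> Prop) (tag : R * R -> nat -> Prop) :
  (forall p n n', tag p n -> tag p n' -> n = n') ->
  (forall N, exists n p, (N <= n)%nat /\ P p /\ tag p n) ->
  infinitely_many P.
Proof.
  intros Huniq Hunb l.
  assert (Hbound : exists N, forall p n, In p l -> tag p n -> (n < N)%nat).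
  { induction l as [|q l [N HN]].
    - exists 0%nat. intros p n [].
    - destruct (classic (exists n, tag q n)) as [[n0 Hn0]|Hnone].
      + exists (Nat.max N (S n0)). intros p n [<-|Hp] Hn.
        * rewrite (Huniq _ _ _ Hn Hn0). lia.
        * specialize (HN p n Hp Hn). lia.
      + exists N. intros p n [<-|Hp] Hn; [exfalso; eauto | eauto]. }
  destruct Hbound as [N HN]. destruct (Hunb N) as [n [p [Hn [HP Htag]]]].
  exists p. split; [exact HP|]. intros Hin. specialize (HN p n Hin Htag). lia.
Qed.

Lemma is_lim_seq_bounds (u : nat -> R) lo hi (l : R) :
  (forall n, lo <= u n <= hi) -> is_lim_seq u l -> lo <= l <= hi.
Proof.
  intros Hu Hl. split.
  - exact (is_lim_seq_le (fun _ => lo) u lo l (fun n => proj1 (Hu n)) (is_lim_seq_const lo) Hl).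
  - exact (is_lim_seq_le u (fun _ => hi) l hi (fun n => proj2 (Hu n)) Hl (is_lim_seq_const hi)).
Qed.

Lemma is_lim_seq_pair (u v : nat -> R) (l1 l2 : R) :
  is_lim_seq u l1 -> is_lim_seq v l2 ->
  filterlim (fun n => (u n, v n)) eventually (locally (l1, l2)).
Proof.
  intros Hu Hv. apply filterlim_locally. intros eps.
  generalize (filter_and _ _ (proj1 (filterlim_locally u l1) Hu eps)
                             (proj1 (filterlim_locally v l2) Hv eps)).
  apply filter_imp. intros n [H1 H2]. now split.
Qed.

Definition sgn (s : bool) : R := if s then 1 else -1.

Lemma sgn_sgn s x : sgn s * (sgn s * x) = x.
Proof. destruct s; cbn; ring. Qed.

Definition admissible (s : Z -> bool) : Prop :=
  forall k, s (k - 1)%Z = s k \/ s (k + 1)%Z = s k.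


Definition blocks (L k : Z) : bool := (k mod (2 * L) <? L)%Z.

Lemma blocks_admissible L : (2 <= L)%Z -> admissible (blocks L).
Proof.
  intros HL k. unfold blocks.
  pose proof (Z.mod_pos_bound k (2 * L) ltac:(lia)) as Hr.
  pose proof (Z.div_mod k (2 * L) ltac:(lia)) as Hk.
  set (r := (k mod (2 * L))%Z) in *. set (q := (k / (2 * L))%Z) in *.
  assert (Hshift : forall j, (0 <= r + j < 2 * L)%Z -> ((k + j) mod (2 * L) = r + j)%Z).
  { intros j Hj. symmetry. apply (Z.mod_unique _ _ q); lia. }
  replace (k - 1)%Z with (k + -1)%Z by lia.
  (* only the first and the L-th residues need the right neighbour *)
  destruct (Z.eq_dec r 0) as [|Hr0]; [|destruct (Z.eq_dec r L) as [|HrL]].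
  - right. rewrite Hshift by lia. apply Bool.eq_iff_eq_true. rewrite !Z.ltb_lt. lia.
  - right. rewrite Hshift by lia. apply Bool.eq_iff_eq_true. rewrite !Z.ltb_lt. lia.
  - left. rewrite Hshift by lia. apply Bool.eq_iff_eq_true. rewrite !Z.ltb_lt. lia.
Qed.

Lemma blocks_periodic L k : blocks L (k + 2 * L)%Z = blocks L k.
Proof.
  unfold blocks. replace (k + 2 * L)%Z with (k + 1 * (2 * L))%Z by lia.
  now rewrite Z_mod_plus_full.
Qed.

Lemma blocks_lt L k : (0 <= k < L)%Z -> blocks L k = true.
Proof. intros Hk. unfold blocks. apply Z.ltb_lt. rewrite Z.mod_small; lia. Qed.

Lemma blocks_L L : (0 < L)%Z -> blocks L L = false.
Proof. intros HL. unfold blocks. apply Z.ltb_ge. rewrite Z.mod_small; lia. Qed.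

Definition homoclinic_pattern (k : Z) : bool := negb ((k =? 0)%Z || (k =? 1)%Z).

Lemma homoclinic_pattern_out k : k <> 0%Z -> k <> 1%Z -> homoclinic_pattern k = true.
Proof.
  intros H0 H1. unfold homoclinic_pattern.
  now rewrite (proj2 (Z.eqb_neq _ _) H0), (proj2 (Z.eqb_neq _ _) H1).
Qed.

Lemma homoclinic_pattern_admissible : admissible homoclinic_pattern.
Proof.
  intros k.
  destruct (Z.eq_dec k 0) as [->|H0]; [now right|].
  destruct (Z.eq_dec k 1) as [->|H1]; [now left|].
  destruct (Z.le_gt_cases 2 k); [right|left]; now rewrite !homoclinic_pattern_out by lia.
Qed.
Section SignCoding.

Variables (g : R -> R) (a b : R).
Hypothesis g_cont : continuity g.
Hypothesis g_odd : forall x, g (- x) = - g x.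
Hypothesis g_slope : forall u v, a <= u -> u <= v -> v <= b -> 5 / 2 * (v - u) <= g v - g u.
Hypothesis g_a : g a <= a - b.
Hypothesis g_b : g b = 2 * b.
Hypothesis a_pos : 0 < a.
Hypothesis a_le_b : a <= b.

Lemma g_sgn s x : g (sgn s * x) = sgn s * g x.
Proof.
  destruct s; cbn.
  - now rewrite !Rmult_1_l.
  - replace (-1 * x) with (- x) by ring. rewrite g_odd. ring.
Qed.

Lemma g_range z : a <= z <= b -> g a <= g z <= g b.
Proof.
  intros Hz. pose proof (g_slope a z (Rle_refl a) (proj1 Hz) (proj2 Hz)).
  pose proof (g_slope z b (proj1 Hz) (proj2 Hz) (Rle_refl b)). lra.
Qed.

Lemma g_le_reflect u v : a <= u <= b -> a <= v <= b -> g u <= g v -> u <= v.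
Proof.
  intros Hu Hv Hg. destruct (Rle_dec u v) as [|Hvu]; [assumption|].
  pose proof (g_slope v u (proj1 Hv) (Rlt_le _ _ (Rnot_le_lt _ _ Hvu)) (proj2 Hu)). lra.
Qed.

Definition clamp (S : R) : R := Rmax (g a) (Rmin S (g b)).

(* the inverse of g on [a, b], extended by constants outside [g a, g b] *)
Definition ginv (S : R) : R :=
  epsilon (inhabits 0) (fun z => a <= z <= b /\ g z = clamp S).

Lemma ginv_spec S : a <= ginv S <= b /\ g (ginv S) = clamp S.
Proof.
  unfold ginv. apply epsilon_spec.
  pose proof (g_range b (conj a_le_b (Rle_refl b))).
  destruct (IVT_gen g a b (clamp S) g_cont) as [z [Hz Hgz]].
  { rewrite Rmin_left, Rmax_right by lra.
    unfold clamp, Rmax, Rmin. repeat destruct Rle_dec; lra. }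
  exists z. rewrite Rmin_left, Rmax_right in Hz by lra. now split.
Qed.

Lemma ginv_mono S S' : S <= S' -> ginv S <= ginv S'.
Proof.
  intros HS. destruct (ginv_spec S) as [H1 E1], (ginv_spec S') as [H2 E2].
  apply g_le_reflect; [exact H1|exact H2|]. rewrite E1, E2.
  unfold clamp, Rmax, Rmin. repeat destruct Rle_dec; lra.
Qed.

Lemma ginv_eq S : g a <= S <= g b -> g (ginv S) = S.
Proof.
  intros HS. rewrite (proj2 (ginv_spec S)).
  unfold clamp, Rmax, Rmin. repeat destruct Rle_dec; lra.
Qed.

Lemma ginv_ge z S : a <= z <= b -> g z <= S -> z <= ginv S.
Proof.
  intros Hz HS. destruct (ginv_spec S) as [H E]. pose proof (g_range z Hz).
  apply g_le_reflect; [exact Hz|exact H|]. rewrite E.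
  unfold clamp, Rmax, Rmin. repeat destruct Rle_dec; lra.
Qed.

Definition branch (s : bool) (S : R) : R := sgn s * ginv (sgn s * S).

Lemma branch_box s S : a <= sgn s * branch s S <= b.
Proof. unfold branch. rewrite sgn_sgn. apply ginv_spec. Qed.

Lemma branch_mono s S S' : S <= S' -> branch s S <= branch s S'.
Proof.
  intros HS. unfold branch. destruct s; cbn.
  - rewrite !Rmult_1_l. now apply ginv_mono.
  - pose proof (ginv_mono (-1 * S') (-1 * S) ltac:(lra)). lra.
Qed.

Lemma branch_eq s S : g a <= sgn s * S <= g b -> g (branch s S) = S.
Proof. intros HS. unfold branch. now rewrite g_sgn, ginv_eq, sgn_sgn. Qed.

Definition in_box (s : Z -> bool) (w : Z -> R) : Prop :=
  forall k, a <= sgn (s k) * w k <= b.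

Definition step (s : Z -> bool) (w : Z -> R) (k : Z) : R :=
  branch (s k) (w (k - 1)%Z + w (k + 1)%Z).

Definition subsolution (s : Z -> bool) (w : Z -> R) : Prop :=
  forall k, w k <= step s w k.

Lemma in_box_abs s w k : in_box s w -> -b <= w k <= b.
Proof. intros Hw. specialize (Hw k). destruct (s k); cbn in Hw; lra. Qed.

Lemma in_box_sign s w k : in_box s w -> 0 < sgn (s k) * w k.
Proof. intros Hw. specialize (Hw k). lra. Qed.

Lemma neighbour_sum_range s w k : admissible s -> in_box s w ->
  g a <= sgn (s k) * (w (k - 1)%Z + w (k + 1)%Z) <= g b.
Proof.
  intros Hs Hw. rewrite g_b, Rmult_plus_distr_l.
  assert (Habs : forall j, -b <= sgn (s k) * w j <= b).
  { intros j. pose proof (in_box_abs s w j Hw). destruct (s k); cbn; lra. }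
  pose proof (Habs (k - 1)%Z). pose proof (Habs (k + 1)%Z).
  (* the neighbour with the same sign contributes at least a *)
  destruct (Hs k) as [E|E];
    [pose proof (Hw (k - 1)%Z) as B | pose proof (Hw (k + 1)%Z) as B];
    rewrite E in B; lra.
Qed.

Lemma step_box s w : in_box s (step s w).
Proof. intros k. apply branch_box. Qed.

Lemma step_eq s w k : admissible s -> in_box s w ->
  g (step s w k) = w (k - 1)%Z + w (k + 1)%Z.
Proof. intros Hs Hw. now apply branch_eq, neighbour_sum_range. Qed.

Lemma step_mono s w w' : (forall k, w k <= w' k) -> forall k, step s w k <= step s w' k.
Proof.
  intros Hww' k. apply branch_mono.
  pose proof (Hww' (k - 1)%Z). pose proof (Hww' (k + 1)%Z). lra.
Qed.

Definition step_iter (s : Z -> bool) (w0 : Z -> R) (n : nat) : Z -> R :=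
  Nat.iter n (step s) w0.

Lemma step_iter_S s w0 n : step_iter s w0 (S n) = step s (step_iter s w0 n).
Proof. reflexivity. Qed.

Lemma step_iter_box s w0 n : in_box s w0 -> in_box s (step_iter s w0 n).
Proof. intros Hw0. destruct n; [exact Hw0|apply step_box]. Qed.

Lemma step_iter_incr s w0 : subsolution s w0 ->
  forall n k, step_iter s w0 n k <= step_iter s w0 (S n) k.
Proof.
  intros Hw0 n. induction n as [|n IH]; [exact Hw0|].
  exact (step_mono s _ _ IH).
Qed.

Lemma step_iter_ge s w0 : subsolution s w0 -> forall n k, w0 k <= step_iter s w0 n k.
Proof.
  intros Hw0 n k. induction n as [|n IH]; [apply Rle_refl|].
  pose proof (step_iter_incr s w0 Hw0 n k). lra.
Qed.

Lemma step_iter_periodic s w0 P :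
  (forall k, s (k + P)%Z = s k) -> (forall k, w0 (k + P)%Z = w0 k) ->
  forall n k, step_iter s w0 n (k + P)%Z = step_iter s w0 n k.
Proof.
  intros Hs Hw0 n. induction n as [|n IH]; intros k; [apply Hw0|].
  rewrite !step_iter_S. unfold step. rewrite Hs.
  replace (k + P - 1)%Z with (k - 1 + P)%Z by lia.
  replace (k + P + 1)%Z with (k + 1 + P)%Z by lia.
  now rewrite !IH.
Qed.

Definition solution (s : Z -> bool) (w0 : Z -> R) (k : Z) : R :=
  real (Lim_seq (fun n => step_iter s w0 n k)).

Section Solution.

Variables (s : Z -> bool) (w0 : Z -> R).
Hypothesis s_adm : admissible s.
Hypothesis w0_box : in_box s w0.
Hypothesis w0_sub : subsolution s w0.

Lemma is_lim_solution k : is_lim_seq (fun n => step_iter s w0 n k) (solution s w0 k).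
Proof.
  destruct (ex_finite_lim_seq_incr (fun n => step_iter s w0 n k) b) as [l Hl].
  - intros n. apply step_iter_incr, w0_sub.
  - intros n. apply (in_box_abs s _ k (step_iter_box s w0 n w0_box)).
  - unfold solution. now rewrite (is_lim_seq_unique _ _ Hl).
Qed.

Lemma solution_box : in_box s (solution s w0).
Proof.
  intros k. apply (is_lim_seq_bounds (fun n => sgn (s k) * step_iter s w0 n k)).
  - intros n. apply (step_iter_box s w0 n w0_box).
  - apply (is_lim_seq_scal_l _ (sgn (s k)) (solution s w0 k)), is_lim_solution.
Qed.

Lemma solution_ge k : w0 k <= solution s w0 k.
Proof.
  apply (is_lim_seq_bounds (fun n => step_iter s w0 n k) (w0 k) b); [|apply is_lim_solution].
  intros n. split; [apply step_iter_ge, w0_sub|].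
  apply (in_box_abs s _ k (step_iter_box s w0 n w0_box)).
Qed.

Lemma solution_rec k :
  g (solution s w0 k) = solution s w0 (k - 1)%Z + solution s w0 (k + 1)%Z.
Proof.
  assert (L1 : is_lim_seq (fun n => g (step_iter s w0 (S n) k)) (g (solution s w0 k))).
  { apply is_lim_seq_continuous; [apply g_cont|].
    apply (is_lim_seq_incr_1 (fun n => step_iter s w0 n k)), is_lim_solution. }
  assert (L2 : is_lim_seq (fun n => g (step_iter s w0 (S n) k))
                 (solution s w0 (k - 1)%Z + solution s w0 (k + 1)%Z)).
  { apply is_lim_seq_ext with
      (fun n => step_iter s w0 n (k - 1)%Z + step_iter s w0 n (k + 1)%Z).
    - intros n. symmetry. apply step_eq; [exact s_adm|]. now apply step_iter_box.
    - apply is_lim_seq_plus'; apply is_lim_solution. }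
  apply is_lim_seq_unique in L1, L2. rewrite L1 in L2. now injection L2.
Qed.

End Solution.

Lemma solution_periodic s w0 P :
  (forall k, s (k + P)%Z = s k) -> (forall k, w0 (k + P)%Z = w0 k) ->
  forall k, solution s w0 (k + P)%Z = solution s w0 k.
Proof.
  intros Hs Hw0 k. unfold solution. f_equal. apply Lim_seq_ext.
  intros n. now apply step_iter_periodic.
Qed.

Definition lower_corner (s : Z -> bool) (k : Z) : R := if s k then a else - b.

Lemma lower_corner_box s : in_box s (lower_corner s).
Proof. intros k. unfold lower_corner. destruct (s k); cbn; lra. Qed.

Lemma lower_corner_le_step s w k : lower_corner s k <= step s w k.
Proof.
  pose proof (step_box s w k). unfold lower_corner. destruct (s k); cbn in *; lra.
Qed.

Lemma lower_corner_subsolution s : subsolution s (lower_corner s).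
Proof. intros k. apply lower_corner_le_step. Qed.

Lemma le_step_of_g_le s w k : s k = true -> a <= w k <= b ->
  g (w k) <= w (k - 1)%Z + w (k + 1)%Z -> w k <= step s w k.
Proof.
  intros Hs Hw Hg. unfold step, branch. rewrite Hs. cbn. rewrite !Rmult_1_l.
  now apply ginv_ge.
Qed.

Lemma henon_periodic_first_negative n :
  exists p, periodic_point (henon g) p /\ first_negative_time (henon g) p (S n).
Proof.
  set (L := (Z.of_nat n + 2)%Z). set (s := blocks L).
  set (x := solution s (lower_corner s)).
  assert (Hadm : admissible s) by (apply blocks_admissible; lia).
  assert (Hbox : in_box s x)
    by exact (solution_box s _ (lower_corner_box s) (lower_corner_subsolution s)).
  assert (Hper : forall k, x (k + 2 * L)%Z = x k).
  { apply solution_periodic; intros k; [apply blocks_periodic|].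
    unfold lower_corner, s. now rewrite blocks_periodic. }
  assert (Horb : forall j, iterF (henon g) j (x 1%Z, x 0%Z) =
                           (x (1 + Z.of_nat j)%Z, x (1 + Z.of_nat j - 1)%Z)).
  { intros j. exact (iterF_henon g x (solution_rec s _ Hadm (lower_corner_box s)
                                        (lower_corner_subsolution s)) j 1). }
  exists (x 1%Z, x 0%Z). split; [|split].
  - exists (Z.to_nat (2 * L)). split; [lia|].
    rewrite Horb, Z2Nat.id by lia.
    replace (1 + 2 * L - 1)%Z with (0 + 2 * L)%Z by lia. now rewrite !Hper.
  - intros j Hj. rewrite Horb. cbn [fst].
    pose proof (in_box_sign s x (1 + Z.of_nat j)%Z Hbox) as Hx.
    unfold s in Hx. rewrite blocks_lt in Hx by lia. unfold sgn in Hx. lra.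
  - rewrite Horb. cbn [fst]. replace (1 + Z.of_nat (S n))%Z with L by lia.
    pose proof (in_box_sign s x L Hbox) as Hx.
    unfold s in Hx. rewrite blocks_L in Hx by lia. unfold sgn in Hx. lra.
Qed.

Lemma henon_infinitely_many_periodic : infinitely_many (periodic_point (henon g)).
Proof.
  apply (infinitely_many_of_unbounded_tags _ (first_negative_time (henon g))).
  - apply first_negative_time_unique.
  - intros N. destruct (henon_periodic_first_negative N) as [p [Hp Htag]].
    exists (S N), p. auto.
Qed.

Definition tail (n : nat) : R := b - (b - a) * (/ 2) ^ n.

Lemma tail_le_S n : tail n <= tail (S n).
Proof. unfold tail. cbn [pow]. pose proof (pow_le (/ 2) n ltac:(lra)). nra. Qed.

Lemma tail_mono m n : (m <= n)%nat -> tail m <= tail n.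
Proof. induction 1 as [|n _ IH]; [lra|]. pose proof (tail_le_S n). lra. Qed.

Lemma tail_bounds n : a <= tail n <= b.
Proof.
  split.
  - replace a with (tail 0) by (unfold tail; cbn; ring). apply tail_mono. lia.
  - unfold tail. pose proof (pow_le (/ 2) n ltac:(lra)). nra.
Qed.

Lemma g_tail_0 : g (tail 0) <= - b + tail 1.
Proof. unfold tail. cbn. replace (b - (b - a) * 1) with a by ring. lra. Qed.

(* 2^-(n-1) + 2^-(n+1) = 5/2 2^-n matches the slope bound of g *)
Lemma g_tail_S n : g (tail (S n)) <= tail n + tail (S (S n)).
Proof.
  assert (E : 2 * b - 5 / 2 * (b - tail (S n)) = tail n + tail (S (S n)))
    by (unfold tail; cbn [pow]; field).
  pose proof (tail_bounds (S n)).
  pose proof (g_slope (tail (S n)) b ltac:(lra) ltac:(lra) (Rle_refl b)). lra.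
Qed.

Lemma is_lim_seq_tail (u : nat -> R) N :
  (forall n, tail n <= u (n + N)%nat <= b) -> is_lim_seq u b.
Proof.
  intros Hu. apply (is_lim_seq_incr_n u N b).
  apply (is_lim_seq_le_le tail _ (fun _ => b)); [exact Hu| |apply is_lim_seq_const].
  replace (Finite b) with (Finite (b - (b - a) * 0)) by (f_equal; ring).
  apply (is_lim_seq_minus' (fun _ => b) (fun n => (b - a) * (/ 2) ^ n));
    [apply is_lim_seq_const|].
  apply (is_lim_seq_scal_l (fun n => (/ 2) ^ n) (b - a) 0), is_lim_seq_geom.
  rewrite Rabs_pos_eq; lra.
Qed.

Definition homoclinic_profile (k : Z) : R :=
  if (2 <=? k)%Z then tail (Z.to_nat (k - 2))
  else if (k <=? -1)%Z then tail (Z.to_nat (-1 - k)) else - b.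

Lemma homoclinic_profile_right n : homoclinic_profile (2 + Z.of_nat n) = tail n.
Proof.
  unfold homoclinic_profile. destruct (Z.leb_spec 2 (2 + Z.of_nat n)); [|lia].
  f_equal. lia.
Qed.

Lemma homoclinic_profile_left n : homoclinic_profile (-1 - Z.of_nat n) = tail n.
Proof.
  unfold homoclinic_profile. destruct (Z.leb_spec 2 (-1 - Z.of_nat n)); [lia|].
  destruct (Z.leb_spec (-1 - Z.of_nat n) (-1)); [|lia]. f_equal. lia.
Qed.

Lemma homoclinic_profile_mid k : (0 <= k <= 1)%Z -> homoclinic_profile k = - b.
Proof.
  intros Hk. unfold homoclinic_profile.
  destruct (Z.leb_spec 2 k); [lia|]. destruct (Z.leb_spec k (-1)); [lia|reflexivity].
Qed.

Lemma homoclinic_profile_ge_tail n k :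
  (2 + Z.of_nat n <= k \/ k <= -1 - Z.of_nat n)%Z -> tail n <= homoclinic_profile k.
Proof.
  intros Hk. unfold homoclinic_profile.
  destruct (Z.leb_spec 2 k); [|destruct (Z.leb_spec k (-1))]; try apply tail_mono; lia.
Qed.

Lemma homoclinic_profile_box : in_box homoclinic_pattern homoclinic_profile.
Proof.
  intros k.
  destruct (Z.le_gt_cases 2 k); [|destruct (Z.le_gt_cases k (-1))].
  - rewrite homoclinic_pattern_out by lia.
    replace k with (2 + Z.of_nat (Z.to_nat (k - 2)))%Z by lia.
    rewrite homoclinic_profile_right. pose proof (tail_bounds (Z.to_nat (k - 2))). unfold sgn; lra.
  - rewrite homoclinic_pattern_out by lia.
    replace k with (-1 - Z.of_nat (Z.to_nat (-1 - k)))%Z by lia.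
    rewrite homoclinic_profile_left. pose proof (tail_bounds (Z.to_nat (-1 - k))). unfold sgn; lra.
  - rewrite homoclinic_profile_mid by lia.
    assert (k = 0 \/ k = 1)%Z as [-> | ->] by lia; cbn; lra.
Qed.

Lemma homoclinic_profile_subsolution : subsolution homoclinic_pattern homoclinic_profile.
Proof.
  intros k.
  destruct (Z.le_gt_cases 2 k) as [Hk|Hk]; [|destruct (Z.le_gt_cases k (-1)) as [Hk'|Hk']].
  - replace k with (2 + Z.of_nat (Z.to_nat (k - 2)))%Z by lia.
    set (n := Z.to_nat (k - 2)).
    apply le_step_of_g_le; [apply homoclinic_pattern_out; lia|
                    rewrite homoclinic_profile_right; apply tail_bounds|].
    rewrite homoclinic_profile_right. destruct n as [|n].
    + replace (2 + Z.of_nat 0 - 1)%Z with 1%Z by lia.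
      replace (2 + Z.of_nat 0 + 1)%Z with (2 + Z.of_nat 1)%Z by lia.
      rewrite homoclinic_profile_mid, homoclinic_profile_right by lia. apply g_tail_0.
    + replace (2 + Z.of_nat (S n) - 1)%Z with (2 + Z.of_nat n)%Z by lia.
      replace (2 + Z.of_nat (S n) + 1)%Z with (2 + Z.of_nat (S (S n)))%Z by lia.
      rewrite !homoclinic_profile_right. apply g_tail_S.
  - replace k with (-1 - Z.of_nat (Z.to_nat (-1 - k)))%Z by lia.
    set (n := Z.to_nat (-1 - k)).
    apply le_step_of_g_le; [apply homoclinic_pattern_out; lia|
                    rewrite homoclinic_profile_left; apply tail_bounds|].
    rewrite homoclinic_profile_left. destruct n as [|n].
    + replace (-1 - Z.of_nat 0 - 1)%Z with (-1 - Z.of_nat 1)%Z by lia.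
      replace (-1 - Z.of_nat 0 + 1)%Z with 0%Z by lia.
      rewrite homoclinic_profile_left, homoclinic_profile_mid by lia.
      rewrite Rplus_comm. apply g_tail_0.
    + replace (-1 - Z.of_nat (S n) - 1)%Z with (-1 - Z.of_nat (S (S n)))%Z by lia.
      replace (-1 - Z.of_nat (S n) + 1)%Z with (-1 - Z.of_nat n)%Z by lia.
      rewrite !homoclinic_profile_left, Rplus_comm. apply g_tail_S.
  - rewrite homoclinic_profile_mid by lia.
    replace (- b) with (lower_corner homoclinic_pattern k); [apply lower_corner_le_step|].
    unfold lower_corner. assert (k = 0 \/ k = 1)%Z as [-> | ->] by lia; reflexivity.
Qed.

Lemma henon_homoclinic t : is_derive g b t -> 2 < Rabs t ->
  exists p, homoclinic_point (henon g) p.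
Proof.
  intros Hder Ht.
  set (x := solution homoclinic_pattern homoclinic_profile).
  pose proof homoclinic_pattern_admissible as Hadm.
  pose proof homoclinic_profile_box as Hbox0.
  pose proof homoclinic_profile_subsolution as Hsub.
  assert (Hrec : forall k, g (x k) = x (k - 1)%Z + x (k + 1)%Z)
    by exact (solution_rec _ _ Hadm Hbox0 Hsub).
  assert (Hbox : in_box homoclinic_pattern x) by exact (solution_box _ _ Hbox0 Hsub).
  assert (Hnear : forall n k, (2 + Z.of_nat n <= k \/ k <= -1 - Z.of_nat n)%Z ->
                              tail n <= x k <= b).
  { intros n k Hk. split.
    - eapply Rle_trans; [apply homoclinic_profile_ge_tail, Hk|].
      exact (solution_ge _ _ Hbox0 Hsub k).
    - pose proof (Hbox k) as B. rewrite homoclinic_pattern_out in B by lia.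
      unfold sgn in B. lra. }
  exists (x 1%Z, x 0%Z), (b, b). split; [|split; [|split]].
  - exact (henon_hyperbolic g b t g_b Hder Ht).
  - intros E. injection E as E _. pose proof (in_box_sign _ x 1 Hbox) as B.
    cbn in B. lra.
  - apply filterlim_ext with (fun n => (x (1 + Z.of_nat n)%Z, x (1 + Z.of_nat n - 1)%Z)).
    { intros n. symmetry. exact (iterF_henon g x Hrec n 1). }
    apply is_lim_seq_pair; apply (is_lim_seq_tail _ 2); intros n; apply Hnear; lia.
  - exists (fun n => (x (1 - Z.of_nat n)%Z, x (- Z.of_nat n)%Z)). split; [reflexivity|split].
    + intros n.
      replace (1 - Z.of_nat (S n))%Z with (- Z.of_nat n)%Z by lia.
      replace (- Z.of_nat (S n))%Z with (- Z.of_nat n - 1)%Z by lia.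
      rewrite (henon_step g x _ Hrec). f_equal. f_equal. lia.
    + apply is_lim_seq_pair; apply (is_lim_seq_tail _ 2); intros n; apply Hnear; lia.
Qed.
End SignCoding.

Definition G (d x : R) : R := sigma / d * (x - beta * rho * x / (beta + x ^ 2)) + 2 * x.

Definition xfix : R := sqrt (beta * (rho - 1)).

Lemma xfix_sqr : xfix ^ 2 = 208 / 3.
Proof.
  unfold xfix. rewrite <- Rsqr_pow2, Rsqr_sqrt; unfold beta, rho; lra.
Qed.

Lemma xfix_bounds : 832 / 100 < xfix < 833 / 100.
Proof.
  pose proof (sqrt_pos (beta * (rho - 1))) as Hpos. fold xfix in Hpos.
  pose proof xfix_sqr. split; nra.
Qed.

Lemma beta_plus_sqr_pos x : 0 < beta + x ^ 2.
Proof. unfold beta. nra. Qed.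

Lemma G_odd d x : G d (- x) = - G d x.
Proof.
  unfold G. pose proof (beta_plus_sqr_pos x).
  replace ((- x) ^ 2) with (x ^ 2) by ring.
  replace (beta * rho * - x / (beta + x ^ 2))
    with (- (beta * rho * x / (beta + x ^ 2))) by (field; lra).
  ring.
Qed.

Lemma G_continuity d : continuity (G d).
Proof.
  intros x. apply continuity_pt_filterlim, (ex_derive_continuous (G d)).
  unfold G. auto_derive. pose proof (beta_plus_sqr_pos x). lra.
Qed.

Lemma G_xfix d : d <> 0 -> G d xfix = 2 * xfix.
Proof.
  intros Hd. unfold G. rewrite xfix_sqr. unfold beta, rho. field. exact Hd.
Qed.

Lemma sigma_div_ge d : 0 < d <= 20 -> 1 / 2 <= sigma / d.
Proof.
  intros Hd. unfold sigma. apply Rmult_le_reg_r with d; [lra|].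
  field_simplify; lra.
Qed.

(* x / (beta + x^2) decreases once x^2 >= beta, and (17/10)^2 >= 8/3 *)
Lemma G_slope d u v : 0 < d <= 20 -> 17 / 10 <= u -> u <= v ->
  5 / 2 * (v - u) <= G d v - G d u.
Proof.
  intros Hd Hu Huv.
  pose proof (beta_plus_sqr_pos u). pose proof (beta_plus_sqr_pos v).
  assert (Hdec : v / (beta + v ^ 2) - u / (beta + u ^ 2) <= 0).
  { replace (v / (beta + v ^ 2) - u / (beta + u ^ 2))
      with ((v - u) * (beta - u * v) / ((beta + u ^ 2) * (beta + v ^ 2))) by (field; lra).
    unfold Rdiv. apply Rmult_le_0_r; [|left; apply Rinv_0_lt_compat; nra].
    apply Rmult_le_0_l; [lra|]. unfold beta. nra. }
  assert (Hh : v - u <= (v - beta * rho * v / (beta + v ^ 2))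
                        - (u - beta * rho * u / (beta + u ^ 2))).
  { replace (beta * rho * v / (beta + v ^ 2)) with (beta * rho * (v / (beta + v ^ 2))) by (field; lra).
    replace (beta * rho * u / (beta + u ^ 2)) with (beta * rho * (u / (beta + u ^ 2))) by (field; lra).
    unfold beta, rho in *. lra. }
  pose proof (sigma_div_ge d Hd). unfold G. nra.
Qed.

Lemma G_17_10 d : 0 < d <= 20 -> G d (17 / 10) <= 17 / 10 - xfix.
Proof.
  intros Hd. unfold G.
  replace (17 / 10 - beta * rho * (17 / 10) / (beta + (17 / 10) ^ 2))
    with (17 / 10 - 36720 / 1667) by (unfold beta, rho; field).
  pose proof (sigma_div_ge d Hd). pose proof xfix_bounds. nra.
Qed.

Lemma G_derive d x : d <> 0 ->
  is_derive (G d) x (sigma / d * (1 - beta * rho * (beta - x ^ 2) / (beta + x ^ 2) ^ 2) + 2).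
Proof.
  intros Hd. pose proof (beta_plus_sqr_pos x).
  unfold G. auto_derive; [lra|]. cbn in *. field. lra.
Qed.

Lemma G_derive_xfix d : d <> 0 -> is_derive (G d) xfix (10 / d * (52 / 27) + 2).
Proof.
  intros Hd.
  replace (10 / d * (52 / 27) + 2)
    with (sigma / d * (1 - beta * rho * (beta - xfix ^ 2) / (beta + xfix ^ 2) ^ 2) + 2).
  - now apply G_derive.
  - rewrite xfix_sqr. unfold sigma, beta, rho. field. exact Hd.
Qed.

Theorem theorem4p3 : forall d : R, 0 < d <= 20 ->
  (exists p, homoclinic_point (Fmap d) p) /\
  infinitely_many (periodic_point (Fmap d)).
Proof.
  intros d Hd.
  change (Fmap d) with (henon (G d)).
  pose proof xfix_bounds.
  assert (Hslope : forall u v, 17 / 10 <= u -> u <= v -> v <= xfix ->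
                     5 / 2 * (v - u) <= G d v - G d u)
    by (intros u v Hu Huv _; now apply G_slope).
  split.
  - apply (henon_homoclinic (G d) (17 / 10) xfix (G_continuity d) (G_odd d) Hslope
             (G_17_10 d Hd) (G_xfix d ltac:(lra)) ltac:(lra) ltac:(lra)
             _ (G_derive_xfix d ltac:(lra))).
    assert (0 < 10 / d) by (apply Rdiv_lt_0_compat; lra).
    rewrite Rabs_pos_eq; lra.
  - exact (henon_infinitely_many_periodic (G d) (17 / 10) xfix (G_continuity d) (G_odd d)
             Hslope (G_17_10 d Hd) (G_xfix d ltac:(lra)) ltac:(lra) ltac:(lra)).
Qed.
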